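(* Let $F$ be a field of characteristic zero and let $\mathrm{Gr}$ be the Grassmann (exterior) algebra over $F$ of a vector space $V$ with basis $e_1,\dots,e_n$ ($n\in\mathbb N$) or with countable basis $e_1,e_2,\dots$. Then every Rota–Baxter operator $R$ of nonzero weight $\lambda$ on $\mathrm{Gr}$ is splitting, and, up to replacing $R$ by $-R-\lambda\,\mathrm{id}$, we have $R(1)=0$.
   Context: A linear operator $R$ on an algebra $A$ is a Rota–Baxter operator of weight $\lambda$ if $R(x)R(y)=R(R(x)y+xR(y)+\lambda xy)$ for all $x,y\in A$. Such $R$ is splitting if $A=A_1\oplus A_2$ as vector spaces for subalgebras $A_1,A_2$ and $R(a_1+a_2)=-\lambda a_2$ for $a_i\in A_i$. *)

From HB Require Import structures.
From mathcomp Require Import all_boot all_order all_algebra.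
Set Implicit Arguments. Unset Strict Implicit. Unset Printing Implicit Defensive.
Import Order.TTheory GRing.Theory Num.Theory.
Local Open Scope ring_scope.

(* Basis vectors of V are e_0, e_1, ... (indexed by nat).  An element of the
   ambient space is a coefficient function x : seq nat -> F, where the value
   x s at a strictly increasing list s = [:: i_1 < ... < i_k] is the
   coefficient of the monomial e_{i_1} /\ ... /\ e_{i_k}  (s = [::] is 1).
   [gr_in b x] says x is an element of Gr:
     b = Some n : Gr of V with basis e_0..e_{n-1};
     b = None   : Gr of V with countable basis e_0, e_1, ...
   (x supported on strictly increasing lists, with entries bounded, which
   forces finite support). *)

Section Grassmann.
Variable F : fieldType.

Definition gr_in (b : option nat) (x : seq nat -> F) : Prop :=
  exists N : nat,
    match b with Some n => (N <= n)%N | None => True end /\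
    forall s, x s != 0 -> sorted ltn s /\ all (fun i => (i < N)%N) s.

Definition gr0 : seq nat -> F := fun _ => 0.
Definition gr1 : seq nat -> F := fun s => if s is [::] then 1 else 0.
Definition gr_add (x y : seq nat -> F) : seq nat -> F := fun s => x s + y s.
Definition gr_scale (a : F) (x : seq nat -> F) : seq nat -> F :=
  fun s => a * x s.

(* number of inversions of the shuffle given by m: pairs of positions i < j
   with position i going to the right factor and j to the left factor *)
Definition gr_inv (k : nat) (m : k.-tuple bool) : nat :=
  (\sum_(i < k) \sum_(j < k) ((i < j)%N && ~~ tnth m i && tnth m j))%N.

(* Grassmann product: e_S e_T = 0 if S, T meet, else sign * e_{S u T} *)
Definition gr_mul (x y : seq nat -> F) : seq nat -> F := fun s =>
  if sorted ltn s then
    \sum_(m : (size s).-tuple bool)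
       (-1) ^+ gr_inv m * x (mask m s) * y (mask (map negb m) s)
  else 0.

Definition is_RB (b : option nat) (lam : F)
  (R : (seq nat -> F) -> (seq nat -> F)) : Prop :=
  (forall x, gr_in b x -> gr_in b (R x)) /\
  (forall a x y, gr_in b x -> gr_in b y ->
     R (gr_add (gr_scale a x) y) = gr_add (gr_scale a (R x)) (R y)) /\
  (forall x y, gr_in b x -> gr_in b y ->
     gr_mul (R x) (R y) =
     R (gr_add (gr_add (gr_mul (R x) y) (gr_mul x (R y)))
               (gr_scale lam (gr_mul x y)))).

(* A is a (not necessarily unital) subalgebra of Gr *)
Definition is_subalg (b : option nat) (A : (seq nat -> F) -> Prop) : Prop :=
  (forall x, A x -> gr_in b x) /\ A gr0 /\
  (forall a x y, A x -> A y -> A (gr_add (gr_scale a x) y)) /\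
  (forall x y, A x -> A y -> A (gr_mul x y)).

Definition splitting (b : option nat) (lam : F)
  (R : (seq nat -> F) -> (seq nat -> F)) : Prop :=
  exists A1 A2 : (seq nat -> F) -> Prop,
    is_subalg b A1 /\ is_subalg b A2 /\
    (forall x, gr_in b x -> exists a1 a2, A1 a1 /\ A2 a2 /\ x = gr_add a1 a2) /\
    (forall x, A1 x -> A2 x -> x = gr0) /\
    (forall a1 a2, A1 a1 -> A2 a2 -> R (gr_add a1 a2) = gr_scale (- lam) a2).

End Grassmann.

From HB Require Import structures.
From mathcomp Require Import all_boot all_order all_algebra.
From mathcomp Require Import ring zify.
From Stdlib Require Import ClassicalEpsilon FunctionalExtensionality.
Set Implicit Arguments. Unset Strict Implicit. Unset Printing Implicit Defensive.
Import Order.TTheory GRing.Theory Num.Theory.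
Local Open Scope ring_scope.

(* Rescaling by [-1/lam] reduces to weight [-1].  For such an operator [P] put
   [a = P 1]; the Rota-Baxter identity with [x = 1] reads
   [a P(y) = P(a y + P(y) - y)], the same recursion that multiplication by [X]
   satisfies with the indefinite sum [S] ([S p(X) - S p(X - 1) = p(X)],
   [S p(0) = 0]).  Hence [P(p(a)) = (S p)(a)] for every polynomial [p], and the
   annihilator of [a] in [F[X]] is an [S]-stable proper ideal.  As [a - a_0] is
   nilpotent, it contains a power of [X - a_0]; if [(X - a_0)^j] is the least
   one, then [S((X - a_0)^j)] is divisible by the coprime [(X - a_0)^j] and
   [(X - a_0 + 1)^j], so [j = 1] by degrees.  Thus [a] is the scalar [a_0], and
   [a^2 = P(2a - 1)] forces [a_0 = 0] or [1].  Then [R (R y) = -lam R y], so Gr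
   is the direct sum of the subalgebras [ker R] and [ker (R + lam)]. *)

Section IndefiniteSummation.
Variable F : fieldType.
Hypothesis charF0 : [pchar F] =i pred0.

Lemma natr_inj_pchar0 : injective (fun n : nat => n%:R : F).
Proof.
have natr_eq0 k : (k%:R : F) = 0 -> k = 0%N.
  by move/eqP; rewrite ((pcharf0P _).1 charF0) => /eqP.
move=> m n /= mn; wlog le_mn : m n mn / (m <= n)%N.
  by move=> W; case: (leqP m n) => [|/ltnW] /W->.
apply/eqP; rewrite eqn_leq le_mn /= -subn_eq0; apply/eqP/natr_eq0.
by rewrite natrB // mn subrr.
Qed.

Definition backdiff (u : {poly F}) : {poly F} := u - (u \Po ('X - 1%:P)).

Lemma backdiff_lin (c : F) (u v : {poly F}) :
  backdiff (c *: u + v) = c *: backdiff u + backdiff v.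
Proof. rewrite /backdiff linearP /= -!mul_polyC; ring. Qed.

Lemma backdiffD (u v : {poly F}) : backdiff (u + v) = backdiff u + backdiff v.
Proof. by have := backdiff_lin 1 u v; rewrite !scale1r. Qed.

Lemma backdiffC (c : F) : backdiff c%:P = 0.
Proof. by rewrite /backdiff comp_polyC subrr. Qed.

Lemma backdiffXM (q : {poly F}) :
  backdiff ('X * q) = 'X * backdiff q + (q \Po ('X - 1%:P)).
Proof. rewrite /backdiff comp_polyM comp_polyX; ring. Qed.

Lemma comp_XsubC_top (c : F) (q : {poly F}) n : (size q <= n.+1)%N ->
  (size (q \Po ('X - c%:P)) <= n.+1)%N /\ (q \Po ('X - c%:P))`_n = q`_n.
Proof.
have size_Xc : size ('X - c%:P) = 2 by rewrite size_XsubC.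
move=> le_qn; rewrite size_comp_poly2 //; split => //.
have [lt_nq|le_qn'] := ltnP n (size q); last first.
  by rewrite !nth_default // size_comp_poly2.
have szq : size q = n.+1 by apply/eqP; rewrite eqn_leq le_qn lt_nq.
have := @lead_coef_comp _ q ('X - c%:P); rewrite size_Xc => /(_ isT).
by rewrite lead_coefXsubC expr1n mulr1 !lead_coefE size_comp_poly2 // szq.
Qed.

(* The top coefficients of [backdiff] are those of the derivative. *)
Lemma backdiff_top n (u : {poly F}) : (size u <= n.+1)%N ->
  (size (backdiff u) <= n)%N /\ (backdiff u)`_n.-1 = n%:R * u`_n.
Proof.
elim/poly_ind: u n => [|p c IH] n le_un.
  by rewrite /backdiff comp_poly0 subrr size_poly0 !coef0 mulr0.
have le_pn : (size p <= n)%N.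
  move: le_un; rewrite size_MXaddC.
  by case: ifP => [/andP[/eqP-> _]|_] //; rewrite size_poly0.
rewrite (mulrC p) backdiffD backdiffC addr0 backdiffXM.
case: n le_pn {le_un} => [|n] le_pn.
  move: le_pn; rewrite size_poly_leq0 mul0r => /eqP->.
  by rewrite /backdiff !comp_poly0 subrr mulr0 addr0 size_poly0 coef0.
have [IHsize IHcoef] := IH n le_pn; have [Csize Ccoef] := comp_XsubC_top 1 le_pn.
rewrite polyC1 in Csize Ccoef; split.
  apply: (leq_trans (size_polyD _ _)); rewrite geq_max Csize andbT.
  by move: (size_polyMleq 'X (backdiff p)); rewrite size_polyX; lia.
rewrite /= !coefD !coefXM Ccoef coefC /= addr0.
have -> : (if n == 0%N then 0 else (backdiff p)`_n.-1) = n%:R * p`_n.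
  by case: (n) IHcoef => [|k] /=; [rewrite mul0r | move=> ->].
by rewrite -[n.+1%:R]natr1 mulrDl mul1r.
Qed.

Lemma size_leq_top_coef0 (r : {poly F}) n :
  (size r <= n.+1)%N -> r`_n = 0 -> (size r <= n)%N.
Proof.
move=> le_rn rn0; rewrite leqNgt; apply/negP => lt_nr.
have szr : size r = n.+1 by apply/eqP; rewrite eqn_leq le_rn lt_nr.
have : lead_coef r == 0 by rewrite lead_coefE szr rn0.
by rewrite lead_coef_eq0 => /eqP r0; move: szr; rewrite r0 size_poly0.
Qed.

Lemma backdiff_surj n (p : {poly F}) : (size p <= n)%N ->
  exists u, [&& backdiff u == p, u.[0] == 0 & (size u <= n.+1)%N].
Proof.
elim: n p => [|n IH] p le_pn.
  move: le_pn; rewrite size_poly_leq0 => /eqP->; exists 0.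
  by rewrite /backdiff comp_poly0 subrr horner0 size_poly0 !eqxx.
pose v := (p`_n / n.+1%:R) *: 'X^(n.+1).
have le_v : (size v <= n.+2)%N by rewrite (leq_trans (size_scale_leq _ _)) ?size_polyXn.
have [Dv_size Dv_top] := backdiff_top le_v.
have n1_neq0 : (n.+1%:R : F) != 0 by rewrite ((pcharf0P _).1 charF0).
have [|w /and3P[/eqP Dw /eqP w0 le_w]] := IH (p - backdiff v).
  apply: size_leq_top_coef0.
    by rewrite (leq_trans (size_polyD _ _)) // geq_max (leq_trans le_pn) // size_polyN.
  by rewrite coefB Dv_top /v coefZ coefXn eqxx mulr1 mulrC divfK ?subrr.
exists (v + w); rewrite backdiffD Dw addrC subrK eqxx hornerD w0 addr0.
rewrite /v hornerZ hornerXn expr0n mulr0 eqxx /=.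
by rewrite (leq_trans (size_polyD _ _)) // geq_max le_v (leq_trans le_w).
Qed.

(* The indefinite sum: the unique [u] with [u(X) - u(X - 1) = p] and [u(0) = 0]. *)
Definition antidiff (p : {poly F}) : {poly F} :=
  xchoose (backdiff_surj (leqnn (size p))).

Lemma antidiff_spec (p : {poly F}) : [&& backdiff (antidiff p) == p,
  (antidiff p).[0] == 0 & (size (antidiff p) <= (size p).+1)%N].
Proof. exact: (xchooseP (backdiff_surj (leqnn (size p)))). Qed.

Lemma antidiffK : cancel antidiff backdiff.
Proof. by move=> p; case/and3P: (antidiff_spec p) => /eqP. Qed.

Lemma antidiff_at0 (p : {poly F}) : (antidiff p).[0] = 0.
Proof. by case/and3P: (antidiff_spec p) => _ /eqP. Qed.

Lemma size_antidiff (p : {poly F}) : (size (antidiff p) <= (size p).+1)%N.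
Proof. by case/and3P: (antidiff_spec p). Qed.

Lemma backdiff_eq0 (u : {poly F}) : backdiff u = 0 -> u.[0] = 0 -> u = 0.
Proof.
move=> /eqP; rewrite subr_eq0 => /eqP uT u0.
have u_nat k : u.[k%:R] = 0.
  elim: k => // k IHk.
  by rewrite {1}uT horner_comp !hornerE -natr1 addrK IHk.
apply: (@roots_geq_poly_eq0 _ _ [seq (i%:R : F) | i <- iota 0 (size u)]).
- by apply/allP => _ /mapP[i _ ->]; rewrite /root u_nat.
- by rewrite map_inj_uniq ?iota_uniq //; apply: natr_inj_pchar0.
- by rewrite size_map size_iota.
Qed.

Lemma antidiff_unique (u p : {poly F}) :
  backdiff u = p -> u.[0] = 0 -> u = antidiff p.
Proof.
move=> Du u0; apply/eqP; rewrite -subr_eq0; apply/eqP/backdiff_eq0.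
  have := backdiff_lin (-1) (antidiff p) u.
  by rewrite !scaleN1r antidiffK Du addrC => ->; rewrite addNr.
by rewrite hornerD hornerN u0 antidiff_at0 subrr.
Qed.

Lemma antidiff0 : antidiff 0 = 0.
Proof.
by symmetry; apply: antidiff_unique; rewrite ?horner0 // /backdiff comp_poly0 subrr.
Qed.

Lemma antidiff_lin (c : F) (p q : {poly F}) :
  antidiff (c *: p + q) = c *: antidiff p + antidiff q.
Proof.
symmetry; apply: antidiff_unique; first by rewrite backdiff_lin !antidiffK.
by rewrite hornerD hornerZ !antidiff_at0 mulr0 addr0.
Qed.

Lemma antidiff_comp_Xsub1 (p : {poly F}) :
  antidiff p \Po ('X - 1%:P) = antidiff p - p.
Proof.
by move: (antidiffK p); rewrite /backdiff => /eqP; rewrite subr_eq addrC -subr_eq => /eqP ->.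
Qed.

Lemma antidiffXM (q : {poly F}) :
  'X * antidiff q = antidiff ('X * q + antidiff q - q).
Proof.
apply: antidiff_unique; last by rewrite hornerM hornerX mul0r.
by rewrite backdiffXM antidiffK antidiff_comp_Xsub1; ring.
Qed.

Lemma antidiff1 : antidiff 1 = 'X.
Proof.
symmetry; apply: antidiff_unique; last by rewrite hornerX.
by rewrite /backdiff comp_polyX polyC1 opprB addrC subrK.
Qed.

(* [antidiff 'X^n] has leading coefficient [1/(n+1)], which is never [-1]. *)
Lemma antidiffXn_lead_neqN1 n : 1 + (antidiff 'X^n)`_n.+1 != 0.
Proof.
have le_S : (size (antidiff 'X^n) <= n.+2)%N.
  by rewrite (leq_trans (size_antidiff _)) // size_polyXn.
have [_] := backdiff_top le_S; rewrite antidiffK coefXn eqxx /= => top.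
apply: contra_eq_neq (_ : n.+2%:R = n.+1%:R * (1 + (antidiff 'X^n)`_n.+1)) => [->|].
  by rewrite mulr0 ((pcharf0P _).1 charF0).
by rewrite mulrDr mulr1 -top natr1.
Qed.

Lemma XsubC_exp_dvdp_antidiff_leq1 (al : F) j :
  ('X - al%:P) ^+ j %| antidiff (('X - al%:P) ^+ j) -> (j <= 1)%N.
Proof.
set m := ('X - al%:P) ^+ j => dv_m.
have dv_shift : ('X - (al - 1)%:P) ^+ j %| antidiff m.
  have dv_T : m %| antidiff m \Po ('X - 1%:P).
    by rewrite antidiff_comp_Xsub1 dvdp_sub.
  have shiftK : ('X - 1%:P) \Po ('X + 1) = 'X :> {poly F}.
    by rewrite comp_polyB comp_polyX comp_polyC polyC1 addrK.
  have shift_m : m \Po ('X + 1) = ('X - (al - 1)%:P) ^+ j.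
    rewrite /m rmorphXn /= comp_polyB comp_polyX comp_polyC polyCB polyC1.
    by congr (_ ^+ _); ring.
  by move: (dvdp_comp_poly ('X + 1) dv_T); rewrite -comp_polyA shiftK comp_polyXr shift_m.
have cop : coprimep m (('X - (al - 1)%:P) ^+ j).
  apply/coprimep_expl/coprimep_expr/coprimep_XsubC2.
  by rewrite addrAC subrr add0r oppr_eq0 oner_eq0.
have nz : antidiff m != 0.
  apply: contra_eq_neq (antidiffK m) => ->.
  by rewrite /backdiff comp_poly0 subrr eq_sym expf_neq0 // polyXsubC_eq0.
have := dvdp_leq nz (_ : m * ('X - (al - 1)%:P) ^+ j %| antidiff m).
rewrite Gauss_dvdp // dv_m dv_shift => /(_ isT).
rewrite size_mul ?expf_neq0 ?polyXsubC_eq0 // !size_exp_XsubC => le_2j.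
by have := leq_trans le_2j (size_antidiff m); rewrite size_exp_XsubC; lia.
Qed.

(* The least power of [X - al] in [I] divides its own indefinite sum. *)
Lemma antidiff_ideal_XsubC (I : {poly F} -> Prop) (al : F) :
  (forall p q, I p -> I q -> I (p + q)) ->
  (forall p q, I p -> I (q * p)) ->
  (forall p, I p -> I (antidiff p)) ->
  ~ I 1 -> (exists k, I (('X - al%:P) ^+ k)) ->
  I ('X - al%:P).
Proof.
move=> ID IM IS I1 [k Ik].
have I_eqp p q : I p -> p %= q -> I q.
  move=> Ip /eqpP[[c1 c2] /= /andP[_ c2n] e].
  have -> : q = (c2^-1 * c1)%:P * p.
    by rewrite mul_polyC -scalerA e scalerA mulVf // scale1r.
  exact: IM.
pose m j := ('X - al%:P) ^+ j.
pose inI j : bool := if excluded_middle_informative (I (m j)) then true else false.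
have inIP j : reflect (I (m j)) (inI j).
  by rewrite /inI; case: excluded_middle_informative => ?; constructor.
have [|j /inIP Ij j_min] := ex_minnP (ex_intro inI k _); first exact/inIP.
have dvd_I p : I p -> m j %| p.
  move=> Ip; have [uv Buv] := Bezoutp (m j) p.
  have Igcd := I_eqp _ _ (ID _ _ (IM _ uv.1 Ij) (IM _ uv.2 Ip)) Buv.
  have /dvdp_exp_XsubCP[i le_ij gcd_mi] : gcdp (m j) p %| m j by apply: dvdp_gcdl.
  have eq_ij : i = j.
    by apply/eqP; rewrite eqn_leq le_ij j_min //; apply/inIP/(I_eqp _ _ Igcd).
  by rewrite /m -eq_ij -(eqp_dvdl _ gcd_mi) dvdp_gcdr.
have j_gt0 : (0 < j)%N by case: j Ij {j_min dvd_I} => // /I1.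
have j_le1 := XsubC_exp_dvdp_antidiff_leq1 (dvd_I _ (IS _ Ij)).
have j1 : j = 1%N by lia.
by rewrite /m j1 expr1 in Ij.
Qed.

End IndefiniteSummation.

Ltac gr_pointwise := apply: functional_extensionality => s; rewrite /gr_add /gr_scale /gr0.

Section GrassmannProduct.
Variable F : fieldType.
Local Notation G := (seq nat -> F).

Definition gr_below (N : nat) (x : G) : Prop :=
  forall s, x s != 0 -> sorted ltn s /\ all (fun i => (i < N)%N) s.

Lemma gr_below_leq N N' (x : G) : (N <= N')%N -> gr_below N x -> gr_below N' x.
Proof.
move=> le_N bx s /bx[s_sorted s_lt]; split=> //.
by apply: sub_all s_lt => i /leq_trans; apply.
Qed.

Lemma gr_below_unsorted N (x : G) s : gr_below N x -> ~~ sorted ltn s -> x s = 0.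
Proof. by move=> bx ns; apply/eqP; apply: contraNT ns => /bx[]. Qed.

Lemma gr_below0 N : gr_below N (@gr0 F).
Proof. by move=> s; rewrite eqxx. Qed.

Lemma gr_below1 N : gr_below N (@gr1 F).
Proof. by case=> [|i s]; rewrite /gr1 ?eqxx. Qed.

Lemma gr_below_add N (x y : G) : gr_below N x -> gr_below N y -> gr_below N (gr_add x y).
Proof.
move=> hx hy s; rewrite /gr_add; have [xs0|/hx//] := eqVneq (x s) 0.
by rewrite xs0 add0r => /hy.
Qed.

Lemma gr_below_scale N c (x : G) : gr_below N x -> gr_below N (gr_scale c x).
Proof.
by move=> hx s; rewrite /gr_scale => nz; apply: hx; apply: contraNneq nz => ->; rewrite mulr0.
Qed.

Lemma size_mask_negb (m : seq bool) (s : seq nat) : size m = size s ->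
  (size (mask m s) + size (mask (map negb m) s))%N = size s.
Proof.
by elim: s m => [|x s IH] [|[] m] //= [/IH]; rewrite ?addSn ?addnS => ->.
Qed.

Lemma all_mask_negb (p : pred nat) (m : seq bool) (s : seq nat) : size m = size s ->
  all p (mask m s) -> all p (mask (map negb m) s) -> all p s.
Proof.
elim: s m => [|x s IH] [|[] m] //= [sz].
  by move=> /andP[-> ?] ?; rewrite (IH m).
by move=> ? /andP[-> ?]; rewrite (IH m).
Qed.

Lemma sumr_neq0_exists (I : finType) (P : pred I) (f : I -> F) :
  \sum_(i | P i) f i != 0 -> exists2 i, P i & f i != 0.
Proof.
move=> nz; apply/exists_inP; apply: contraNT nz => /exists_inPn f0.
by rewrite big1 // => i /f0 /negPn/eqP.
Qed.

Lemma gr_mul_unsorted (x y : G) s : ~~ sorted ltn s -> gr_mul x y s = 0.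
Proof. by rewrite /gr_mul => /negPf->. Qed.

Lemma gr_below_mul N (x y : G) : gr_below N x -> gr_below N y -> gr_below N (gr_mul x y).
Proof.
move=> hx hy s; rewrite /gr_mul; case: ifP => [s_sorted|_]; last by rewrite eqxx.
case/sumr_neq0_exists=> m _ nz.
have /hx[_ all_x] : x (mask m s) != 0 by apply: contraNneq nz => ->; rewrite mulr0 mul0r.
have /hy[_ all_y] : y (mask (map negb m) s) != 0 by apply: contraNneq nz => ->; rewrite mulr0.
by split=> //; apply: (all_mask_negb (size_tuple m)).
Qed.

Lemma gr_mulDr (x y z : G) c :
  gr_mul x (gr_add (gr_scale c y) z) = gr_add (gr_scale c (gr_mul x y)) (gr_mul x z).
Proof.
apply: functional_extensionality => s; rewrite /gr_mul /gr_add /gr_scale.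
case: ifP => _; last by rewrite mulr0 addr0.
by rewrite mulr_sumr -big_split; apply: eq_bigr => m _ /=; ring.
Qed.

Lemma gr_mulDl (x y z : G) c :
  gr_mul (gr_add (gr_scale c x) y) z = gr_add (gr_scale c (gr_mul x z)) (gr_mul y z).
Proof.
apply: functional_extensionality => s; rewrite /gr_mul /gr_add /gr_scale.
case: ifP => _; last by rewrite mulr0 addr0.
by rewrite mulr_sumr -big_split; apply: eq_bigr => m _ /=; ring.
Qed.

Lemma gr_mul0r (x : G) : gr_mul x (@gr0 F) = @gr0 F.
Proof.
apply: functional_extensionality => s; rewrite /gr_mul /gr0.
by case: ifP => // _; rewrite big1 // => m _; rewrite mulr0.
Qed.

Lemma gr_mul0l (x : G) : gr_mul (@gr0 F) x = @gr0 F.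
Proof.
apply: functional_extensionality => s; rewrite /gr_mul /gr0.
by case: ifP => // _; rewrite big1 // => m _; rewrite mulr0 mul0r.
Qed.

Lemma gr_addr0 (x : G) : gr_add x (@gr0 F) = x.
Proof. by gr_pointwise; rewrite addr0. Qed.

Lemma gr_add0r (x : G) : gr_add (@gr0 F) x = x.
Proof. by gr_pointwise; rewrite add0r. Qed.

Lemma gr_scale1 (x : G) : gr_scale 1 x = x.
Proof. by gr_pointwise; rewrite mul1r. Qed.

Lemma gr_scaler0 c : gr_scale c (@gr0 F) = @gr0 F.
Proof. by gr_pointwise; rewrite mulr0. Qed.

Lemma gr_scale_inj (c : F) : c != 0 -> injective (gr_scale c).
Proof.
move=> c_neq0 x y xy; apply: functional_extensionality => s.
exact: (mulfI c_neq0 (congr1 (fun f => f s) xy)).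
Qed.

Lemma gr_mulZl (x y : G) c : gr_mul (gr_scale c x) y = gr_scale c (gr_mul x y).
Proof. by have := gr_mulDl x (@gr0 F) y c; rewrite gr_mul0l !gr_addr0. Qed.

Lemma gr_mulZr (x y : G) c : gr_mul x (gr_scale c y) = gr_scale c (gr_mul x y).
Proof. by have := gr_mulDr x y (@gr0 F) c; rewrite gr_mul0r !gr_addr0. Qed.

Lemma gr_mul_sumr (x : G) n (c : nat -> F) (f : nat -> G) :
  gr_mul x (fun t => \sum_(0 <= i < n) c i * f i t) =
  fun s => \sum_(0 <= i < n) c i * gr_mul x (f i) s.
Proof.
apply: functional_extensionality => s; rewrite /gr_mul.
case: ifP => _; last by rewrite big1 // => i _; rewrite mulr0.
under eq_bigr do rewrite mulr_sumr.
rewrite exchange_big /=; apply: eq_bigr => i _.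
by rewrite mulr_sumr; apply: eq_bigr => m _; ring.
Qed.

Lemma gr_inv_nseq n c : gr_inv [tuple of nseq n c] = 0%N.
Proof.
rewrite /gr_inv big1 // => i _; rewrite big1 // => j _.
by rewrite !tnth_nseq -andbA andNb andbF.
Qed.

Lemma mask_eq_nil (m : seq bool) (s : seq nat) : size m = size s ->
  (mask m s == [::]) = (m == nseq (size s) false).
Proof. by elim: s m => [|x s IH] [|[] m] //= [/IH]. Qed.

Lemma gr_mul_splitl (x y : G) s : sorted ltn s ->
  gr_mul x y s = x [::] * y s +
    \sum_(m : (size s).-tuple bool | m != [tuple of nseq (size s) false])
       (-1) ^+ gr_inv m * x (mask m s) * y (mask (map negb m) s).
Proof.
move=> s_sorted; rewrite /gr_mul s_sorted (bigD1 [tuple of nseq _ false]) //=.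
by rewrite gr_inv_nseq mask_false map_nseq mask_true ?size_nseq // mul1r.
Qed.

Lemma gr_mul_nil (x y : G) : gr_mul x y [::] = x [::] * y [::].
Proof.
rewrite gr_mul_splitl // big1 ?addr0 // => -[[|//] ?] /eqP[].
exact: val_inj.
Qed.

Lemma gr_mul1l N (y : G) : gr_below N y -> gr_mul (@gr1 F) y = y.
Proof.
move=> hy; apply: functional_extensionality => s.
have [s_sorted|?] := boolP (sorted ltn s); last first.
  by rewrite gr_mul_unsorted // (gr_below_unsorted hy).
rewrite gr_mul_splitl // big1 ?addr0 /gr1 ?mul1r // => m nm.
have : mask m s != [::] by rewrite mask_eq_nil ?size_tuple.
by case: (mask m s) => // i t _; rewrite mulr0 mul0r.
Qed.

Lemma gr_mul1r N (x : G) : gr_below N x -> gr_mul x (@gr1 F) = x.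
Proof.
move=> hx; apply: functional_extensionality => s.
have [s_sorted|?] := boolP (sorted ltn s); last first.
  by rewrite gr_mul_unsorted // (gr_below_unsorted hx).
rewrite /gr_mul s_sorted (bigD1 [tuple of nseq _ true]) //= big1 ?addr0.
  by rewrite gr_inv_nseq mask_true ?size_nseq // map_nseq mask_false /gr1 mulr1 mul1r.
move=> m nm; have : mask (map negb m) s != [::].
  rewrite mask_eq_nil ?size_map ?size_tuple //; apply: contra nm => /eqP m_true.
  by apply/eqP/val_inj; rewrite /= -[val m](mapK negbK) m_true map_nseq.
by case: (mask (map negb m) s) => // i t _; rewrite /gr1 mulr0.
Qed.

Lemma sorted_ltn_size_leq N (t : seq nat) :
  sorted ltn t -> all (fun i => (i < N)%N) t -> (size t <= N)%N.
Proof.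
move=> t_sorted t_lt; rewrite -(size_iota 0 N).
apply: uniq_leq_size (sorted_uniq ltn_trans ltnn t_sorted) _ => i it.
by rewrite mem_iota /= add0n (allP t_lt i it).
Qed.

Fixpoint gr_pow (x : G) k : G := if k is k'.+1 then gr_mul x (gr_pow x k') else @gr1 F.

Definition gr_eval (x : G) (p : {poly F}) : G :=
  fun s => \sum_(0 <= i < size p) p`_i * gr_pow x i s.

Section Evaluation.
Variables (N : nat) (x : G).
Hypothesis x_below : gr_below N x.

Lemma gr_below_pow k : gr_below N (gr_pow x k).
Proof. by elim: k => [|k IH] /=; [apply: gr_below1 | apply: gr_below_mul]. Qed.

Lemma gr_below_eval p : gr_below N (gr_eval x p).
Proof.
move=> s; rewrite /gr_eval big_mkord => /sumr_neq0_exists[i _ nz].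
by apply: (@gr_below_pow i s); apply: contraNneq nz => ->; rewrite mulr0.
Qed.

Lemma gr_eval_widen (p : {poly F}) n : (size p <= n)%N ->
  gr_eval x p = fun s => \sum_(0 <= i < n) p`_i * gr_pow x i s.
Proof.
move=> le_pn; apply: functional_extensionality => s; rewrite /gr_eval.
rewrite (big_cat_nat (leq0n _) le_pn) /= [X in _ = _ + X]big1_seq ?addr0 //.
by move=> i /andP[_]; rewrite mem_index_iota => /andP[le_pi _]; rewrite nth_default // mul0r.
Qed.

Lemma gr_eval_lin c (p q : {poly F}) :
  gr_eval x (c *: p + q) = gr_add (gr_scale c (gr_eval x p)) (gr_eval x q).
Proof.
set n := maxn (size p) (size q).
have le_pn : (size p <= n)%N by rewrite leq_maxl.
have le_qn : (size q <= n)%N by rewrite leq_maxr.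
have le_n : (size (c *: p + q)%R <= n)%N.
  rewrite (leq_trans (size_polyD _ _)) // geq_max le_qn andbT.
  exact: leq_trans (size_scale_leq _ _) le_pn.
rewrite (gr_eval_widen le_n) (gr_eval_widen le_pn) (gr_eval_widen le_qn).
apply: functional_extensionality => s; rewrite /gr_add /gr_scale mulr_sumr -big_split.
by apply: eq_bigr => i _ /=; rewrite coefD coefZ; ring.
Qed.

Lemma gr_evalD (p q : {poly F}) : gr_eval x (p + q) = gr_add (gr_eval x p) (gr_eval x q).
Proof. by rewrite -[p in LHS]scale1r gr_eval_lin gr_scale1. Qed.

Lemma gr_eval0 : gr_eval x 0 = @gr0 F.
Proof. by apply: functional_extensionality => s; rewrite /gr_eval size_poly0 big_geq. Qed.

Lemma gr_evalZ c (p : {poly F}) : gr_eval x (c *: p) = gr_scale c (gr_eval x p).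
Proof. by rewrite -[c *: p]addr0 gr_eval_lin gr_eval0 gr_addr0. Qed.

Lemma gr_evalXM (p : {poly F}) : gr_eval x ('X * p) = gr_mul x (gr_eval x p).
Proof.
have le_Xp : (size ('X * p)%R <= (size p).+1)%N.
  by move: (size_polyMleq 'X p); rewrite size_polyX; lia.
rewrite (gr_eval_widen le_Xp) /gr_eval gr_mul_sumr; apply: functional_extensionality => s.
by rewrite big_nat_recl //= coefXM /= mul0r add0r; apply: eq_bigr => i _; rewrite coefXM.
Qed.

Lemma gr_eval1 : gr_eval x 1 = @gr1 F.
Proof.
by apply: functional_extensionality => s; rewrite /gr_eval size_poly1 big_nat1 coef1 mul1r.
Qed.

Lemma gr_evalX : gr_eval x 'X = x.
Proof. by rewrite -[X in gr_eval x X]mulr1 gr_evalXM gr_eval1 (gr_mul1r x_below). Qed.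

Lemma gr_eval_XsubCM (q : {poly F}) : gr_eval x (('X - (x [::])%:P) * q) =
  gr_add (gr_mul x (gr_eval x q)) (gr_scale (- x [::]) (gr_eval x q)).
Proof.
have -> : ('X - (x [::])%:P) * q = 'X * q + (- x [::]) *: q.
  by rewrite mulrBl -mul_polyC polyCN mulNr.
by rewrite gr_evalD gr_evalXM gr_evalZ.
Qed.

(* Multiplying by [x - x_0] strictly raises the degree of the lowest
   monomials, since [x - x_0] has no constant term. *)
Lemma gr_mul_XsubC_support (y : G) k :
  gr_below N y -> (forall t, y t != 0 -> (k <= size t)%N) ->
  forall t, gr_add (gr_mul x y) (gr_scale (- x [::]) y) t != 0 -> (k < size t)%N.
Proof.
move=> y_below y_high t; rewrite /gr_add /gr_scale.
have [t_sorted|?] := boolP (sorted ltn t); last first.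
  by rewrite gr_mul_unsorted // (gr_below_unsorted y_below) // mulr0 addr0 eqxx.
rewrite gr_mul_splitl // addrAC mulNr addrN add0r => /sumr_neq0_exists[m nm nz].
have /y_high le_k : y (mask (map negb m) t) != 0 by apply: contraNneq nz => ->; rewrite mulr0.
have : (0 < size (mask m t))%N by rewrite lt0n size_eq0 mask_eq_nil ?size_tuple.
by have := size_mask_negb (size_tuple m); lia.
Qed.

Lemma gr_eval_XsubC_exp_support k t :
  gr_eval x (('X - (x [::])%:P) ^+ k) t != 0 -> (k <= size t)%N.
Proof.
elim: k t => [|k IH] t //; rewrite exprS gr_eval_XsubCM.
by apply: gr_mul_XsubC_support => //; apply: gr_below_eval.
Qed.

Lemma gr_eval_XsubC_nilpotent : gr_eval x (('X - (x [::])%:P) ^+ N.+1) = @gr0 F.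
Proof.
apply: functional_extensionality => t; apply/eqP; apply: contraT => nz.
have [t_sorted t_lt] := gr_below_eval nz.
by have := gr_eval_XsubC_exp_support nz; rewrite ltnNge sorted_ltn_size_leq.
Qed.

End Evaluation.

End GrassmannProduct.

Section GrassmannElements.
Variables (F : fieldType) (b : option nat).
Local Notation G := (seq nat -> F).
Local Notation gr_in := (@gr_in F b).

Lemma gr_in_op2 (op : G -> G -> G) :
  (forall N x y, gr_below N x -> gr_below N y -> gr_below N (op x y)) ->
  forall x y, gr_in x -> gr_in y -> gr_in (op x y).
Proof.
move=> op_below x y [N1 [b1 x_below]] [N2 [b2 y_below]]; exists (maxn N1 N2); split.
  by case: b b1 b2 => // n; rewrite geq_max => -> ->.
by apply: op_below; [apply: gr_below_leq x_below | apply: gr_below_leq y_below];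
  rewrite ?leq_maxl ?leq_maxr.
Qed.

Lemma gr_in_mul (x y : G) : gr_in x -> gr_in y -> gr_in (gr_mul x y).
Proof. by apply: gr_in_op2 => N; apply: gr_below_mul. Qed.

Lemma gr_in_add (x y : G) : gr_in x -> gr_in y -> gr_in (gr_add x y).
Proof. by apply: gr_in_op2 => N; apply: gr_below_add. Qed.

Lemma gr_in_scale c (x : G) : gr_in x -> gr_in (gr_scale c x).
Proof. by move=> [N [bN x_below]]; exists N; split => //; apply: gr_below_scale. Qed.

Lemma gr_in0 : gr_in (@gr0 F).
Proof. by exists 0%N; split; [case: b | apply: gr_below0]. Qed.

Lemma gr_in1 : gr_in (@gr1 F).
Proof. by exists 0%N; split; [case: b | apply: gr_below1]. Qed.

Lemma gr_mul1l_in (y : G) : gr_in y -> gr_mul (@gr1 F) y = y.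
Proof. by move=> [N [_ y_below]]; apply: gr_mul1l y_below. Qed.

End GrassmannElements.

Section RotaBaxter.
Variables (F : fieldType) (b : option nat) (lam : F).
Variable R : (seq nat -> F) -> (seq nat -> F).
Hypothesis RB : is_RB b lam R.
Local Notation G := (seq nat -> F).
Local Notation gr_in := (@gr_in F b).

Lemma RB_in (x : G) : gr_in x -> gr_in (R x).
Proof. exact: RB.1. Qed.

Lemma RB_lin c (x y : G) : gr_in x -> gr_in y ->
  R (gr_add (gr_scale c x) y) = gr_add (gr_scale c (R x)) (R y).
Proof. exact: RB.2.1. Qed.

Lemma RB_mul (x y : G) : gr_in x -> gr_in y ->
  gr_mul (R x) (R y) =
  R (gr_add (gr_add (gr_mul (R x) y) (gr_mul x (R y))) (gr_scale lam (gr_mul x y))).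
Proof. exact: RB.2.2. Qed.

Lemma RB0 : R (@gr0 F) = @gr0 F.
Proof.
have R00 := RB_lin 1 (gr_in0 F b) (gr_in0 F b).
rewrite !gr_scale1 gr_addr0 in R00; gr_pointwise.
have := congr1 (fun f => f s) R00; rewrite /gr_add => /esym/eqP.
by rewrite -subr_eq0 addrK => /eqP.
Qed.

Lemma RBZ c (x : G) : gr_in x -> R (gr_scale c x) = gr_scale c (R x).
Proof. by move=> x_in; have := RB_lin c x_in (gr_in0 F b); rewrite RB0 !gr_addr0. Qed.

Lemma RBD (x y : G) : gr_in x -> gr_in y -> R (gr_add x y) = gr_add (R x) (R y).
Proof. by move=> x_in y_in; have := RB_lin 1 x_in y_in; rewrite !gr_scale1. Qed.

Lemma RB_mul1l (y : G) : gr_in y ->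
  gr_mul (R (@gr1 F)) (R y) =
  R (gr_add (gr_add (gr_mul (R (@gr1 F)) y) (R y)) (gr_scale lam y)).
Proof.
move=> y_in; have := RB_mul (gr_in1 F b) y_in.
by rewrite (gr_mul1l_in (RB_in y_in)) (gr_mul1l_in y_in).
Qed.

End RotaBaxter.

Lemma is_RB_scale (F : fieldType) (b : option nat) (lam c : F)
    (R : (seq nat -> F) -> (seq nat -> F)) :
  is_RB b lam R -> is_RB b (c * lam) (fun x => gr_scale c (R x)).
Proof.
move=> RB; split; first by move=> x /(RB_in RB)/gr_in_scale.
split=> [a x y x_in y_in | x y x_in y_in].
  by rewrite (RB_lin RB) //; gr_pointwise; ring.
have Rx_in := RB_in RB x_in; have Ry_in := RB_in RB y_in.
rewrite gr_mulZl !gr_mulZr gr_mulZl (RB_mul RB) // -(RBZ RB); last first.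
  by apply: gr_in_add; [apply: gr_in_add | apply: gr_in_scale]; apply: gr_in_mul.
by congr (gr_scale c (R _)); gr_pointwise; ring.
Qed.

Section UnitImageWeightN1.
Variables (F : fieldType) (b : option nat).
Hypothesis charF0 : [pchar F] =i pred0.
Variable P : (seq nat -> F) -> (seq nat -> F).
Hypothesis PRB : is_RB b (-1) P.
Local Notation G := (seq nat -> F).
Local Notation gr_in := (@gr_in F b).
Local Notation antidiff := (antidiff charF0).

Local Notation a := (P (@gr1 F)).

Lemma gr_in_unit_image : gr_in a. Proof. exact: (RB_in PRB (gr_in1 F b)). Qed.

Lemma gr_in_eval_unit p : gr_in (gr_eval a p).
Proof.
by have [N [bN a_below]] := gr_in_unit_image; exists N; split=> //; apply: gr_below_eval.
Qed.

Lemma gr_eval_unitX : gr_eval a 'X = a.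
Proof. by have [N [_ a_below]] := gr_in_unit_image; apply: gr_evalX a_below. Qed.

Definition transfers (p : {poly F}) := P (gr_eval a p) = gr_eval a (antidiff p).

Lemma transfers_lin c p q : transfers p -> transfers q -> transfers (c *: p + q).
Proof.
rewrite /transfers antidiff_lin !gr_eval_lin => <- <-.
exact: (RB_lin PRB c (gr_in_eval_unit p) (gr_in_eval_unit q)).
Qed.

Lemma transfers0 : transfers 0.
Proof. by rewrite /transfers antidiff0 gr_eval0 (RB0 PRB). Qed.

Lemma transfers1 : transfers 1.
Proof. by rewrite /transfers gr_eval1 antidiff1 gr_eval_unitX. Qed.

(* With [x = 1] and weight [-1] the Rota-Baxter identity reads
   [a P(y) = P(a y + P y - y)]; compare [antidiffXM]. *)
Lemma transfers_step q : transfers q -> transfers ('X * q + antidiff q - q).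
Proof.
move=> tq; have := RB_mul1l PRB (gr_in_eval_unit q).
rewrite tq -!gr_evalXM antidiffXM -gr_evalZ -!gr_evalD scaleN1r => Sr.
by rewrite /transfers Sr.
Qed.

Lemma transfers_small n (p : {poly F}) : (size p <= n)%N -> transfers p.
Proof.
elim: n p => [|n IH] p le_pn.
  by move: le_pn; rewrite size_poly_leq0 => /eqP->; apply: transfers0.
have tXn : transfers 'X^n.
  case: n IH {le_pn} => [|k] IH; first by rewrite expr0; apply: transfers1.
  set r := 'X^(k.+1) + antidiff 'X^k - 'X^k.
  have tr : transfers r by rewrite /r exprS; apply/transfers_step/IH; rewrite size_polyXn.
  set c := 1 + (antidiff 'X^k)`_k.+1.
  have tr' : transfers (r - c *: 'X^(k.+1)).
    apply/IH/size_leq_top_coef0.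
      have := size_polyD r (- (c *: 'X^(k.+1))); have := size_scale_leq c 'X^(k.+1).
      have := size_polyD ('X^(k.+1) + antidiff 'X^k) (- 'X^k).
      have := size_polyD 'X^(k.+1) (antidiff 'X^k); have := size_antidiff charF0 'X^k.
      rewrite /r !size_polyN !size_polyXn => h1 h2 h3 h4 h5.
      apply: leq_trans h5 _; rewrite geq_max h4 andbT.
      apply: leq_trans h3 _; rewrite geq_max leqnSn andbT.
      by apply: leq_trans h2 _; rewrite geq_max leqnn h1.
    rewrite /r !coefB coefD coefZ !coefXn eqxx (gtn_eqF (ltnSn k)) /c.
    by rewrite mulr1 subr0 subrr.
  have tcX : transfers (c *: 'X^(k.+1)).
    have -> : c *: 'X^(k.+1) = (-1) *: (r - c *: 'X^(k.+1)) + r.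
      by rewrite scaleN1r opprB subrK.
    exact: transfers_lin.
  have -> : 'X^(k.+1) = c^-1 *: (c *: 'X^(k.+1)) + 0.
    by rewrite addr0 scalerA mulVf ?scale1r // antidiffXn_lead_neqN1.
  exact: transfers_lin tcX transfers0.
rewrite -(subrK (p`_n *: 'X^n) p) addrC; apply: transfers_lin tXn (IH _ _).
apply: size_leq_top_coef0; last by rewrite coefB coefZ coefXn eqxx mulr1 subrr.
apply: leq_trans (size_polyD _ _) _; rewrite geq_max le_pn size_polyN.
by rewrite (leq_trans (size_scale_leq _ _)) // size_polyXn.
Qed.

Lemma transfers_all (p : {poly F}) : P (gr_eval a p) = gr_eval a (antidiff p).
Proof. exact: transfers_small (leqnn _). Qed.

Definition annihilates (p : {poly F}) := gr_eval a p = @gr0 F.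

Lemma annihilatesM p q : annihilates p -> annihilates (q * p).
Proof.
move=> ann_p; elim/poly_ind: q => [|q c IH]; first by rewrite mul0r /annihilates gr_eval0.
have -> : (q * 'X + c%:P) * p = 'X * (q * p) + c *: p.
  by rewrite mulrDl mul_polyC mulrAC mulrC.
by rewrite /annihilates gr_evalD gr_evalXM gr_evalZ IH ann_p gr_mul0r; gr_pointwise; ring.
Qed.

Lemma unit_image_scalar : a = gr_scale (a [::]) (@gr1 F).
Proof.
have [N [_ a_below]] := gr_in_unit_image.
have : annihilates ('X - (a [::])%:P).
  apply: (@antidiff_ideal_XsubC _ charF0 annihilates) => [p q|p q|p|ann1|].
  - by rewrite /annihilates gr_evalD => -> ->; rewrite gr_addr0.
  - exact: annihilatesM.
  - by rewrite /annihilates -transfers_all => ->; rewrite (RB0 PRB).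
  - have := congr1 (fun f => f [::]) ann1.
    by rewrite gr_eval1 /gr1 /gr0 => /eqP; rewrite oner_eq0.
  - by exists N.+1; apply: gr_eval_XsubC_nilpotent a_below.
rewrite /annihilates -[_ - _]mulr1 gr_eval_XsubCM gr_eval1 (gr_mul1r a_below) => a0.
gr_pointwise; have := congr1 (fun f => f s) a0; rewrite /gr_add /gr_scale /gr0.
by move/eqP; rewrite mulNr subr_eq0 => /eqP.
Qed.

Lemma unit_image_cases : a = @gr0 F \/ a = @gr1 F.
Proof.
have aa := RB_mul1l PRB (gr_in1 F b).
have [N [_ a_below]] := gr_in_unit_image.
rewrite (gr_mul1r a_below) in aa.
have two_a : gr_add (gr_add a a) (gr_scale (-1) (@gr1 F)) =
    gr_scale (2 * a [::] - 1) (@gr1 F).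
  by rewrite [in LHS]unit_image_scalar; gr_pointwise; ring.
rewrite two_a (RBZ PRB _ (gr_in1 F b)) in aa.
have /eqP : a [::] * (a [::] - 1) = 0.
  have := congr1 (fun f => f [::]) aa; rewrite gr_mul_nil /gr_scale => aa0.
  have -> : a [::] * (a [::] - 1) = (2 * a [::] - 1) * a [::] - a [::] * a [::] by ring.
  by rewrite -aa0 subrr.
rewrite mulf_eq0 subr_eq0 => /orP[] /eqP a0; rewrite unit_image_scalar a0.
  by left; gr_pointwise; rewrite mul0r.
by right; gr_pointwise; rewrite mul1r.
Qed.

End UnitImageWeightN1.

Section NonzeroWeight.
Variables (F : fieldType) (b : option nat) (lam : F).
Hypothesis charF0 : [pchar F] =i pred0.
Hypothesis lam_neq0 : lam != 0.
Variable R : (seq nat -> F) -> (seq nat -> F).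
Hypothesis RB : is_RB b lam R.
Local Notation G := (seq nat -> F).
Local Notation gr_in := (@gr_in F b).

Lemma subalg_RB_kernel : is_subalg b (fun x => gr_in x /\ R x = @gr0 F).
Proof.
split; first by move=> x [].
split; first by split; [apply: gr_in0 | apply: RB0 RB].
split=> [c x y [x_in Rx] [y_in Ry] | x y [x_in Rx] [y_in Ry]].
  split; first exact: (gr_in_add (gr_in_scale c x_in) y_in).
  by rewrite (RB_lin RB) // Rx Ry gr_scaler0 gr_addr0.
have xy_in := gr_in_mul x_in y_in; split=> //.
have := RB_mul RB x_in y_in; rewrite Rx Ry gr_mul0l gr_mul0l gr_mul0r.
have -> : gr_add (gr_add (@gr0 F) (@gr0 F)) (gr_scale lam (gr_mul x y)) =
    gr_scale lam (gr_mul x y) by gr_pointwise; ring.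
by rewrite (RBZ RB) // -{1}(gr_scaler0 lam) => /gr_scale_inj ->.
Qed.

Lemma subalg_RB_eigen : is_subalg b (fun x => gr_in x /\ R x = gr_scale (- lam) x).
Proof.
split; first by move=> x [].
split; first by split; [apply: gr_in0 | rewrite (RB0 RB) gr_scaler0].
split=> [c x y [x_in Rx] [y_in Ry] | x y [x_in Rx] [y_in Ry]].
  split; first exact: (gr_in_add (gr_in_scale c x_in) y_in).
  by rewrite (RB_lin RB) // Rx Ry; gr_pointwise; ring.
have xy_in := gr_in_mul x_in y_in; split=> //.
have := RB_mul RB x_in y_in; rewrite Rx Ry !gr_mulZl !gr_mulZr.
have -> : gr_add (gr_add (gr_scale (- lam) (gr_mul x y)) (gr_scale (- lam) (gr_mul x y)))
    (gr_scale lam (gr_mul x y)) = gr_scale (- lam) (gr_mul x y) by gr_pointwise; ring.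
rewrite (RBZ RB) // => E; apply: (gr_scale_inj (_ : - lam != 0)); first by rewrite oppr_eq0.
by rewrite -E; gr_pointwise; ring.
Qed.

Lemma RB_unit_cases :
  R (@gr1 F) = @gr0 F \/ R (@gr1 F) = gr_scale (- lam) (@gr1 F).
Proof.
have := is_RB_scale (- lam^-1) RB; rewrite mulNr mulVf // => PRB.
have lam_inv_neq0 : - lam^-1 != 0 by rewrite oppr_eq0 invr_eq0.
have [R1|R1] := unit_image_cases charF0 PRB; [left|right].
  by apply: (gr_scale_inj lam_inv_neq0); rewrite R1 gr_scaler0.
apply: (gr_scale_inj lam_inv_neq0); rewrite R1; gr_pointwise.
by rewrite mulrA mulrNN mulVf // mul1r.
Qed.

Lemma RB_idempotent y : gr_in y -> R (R y) = gr_scale (- lam) (R y).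
Proof.
move=> y_in; have Ry_in := RB_in RB y_in.
have := RB_mul1l RB y_in; have [->|->] := RB_unit_cases.
  rewrite !gr_mul0l gr_add0r (RBD RB Ry_in (gr_in_scale lam y_in)) (RBZ RB _ y_in).
  move=> E; gr_pointwise; have := congr1 (fun f => f s) E; rewrite /gr_add /gr_scale /gr0.
  by move/eqP; rewrite eq_sym addr_eq0 mulNr => /eqP.
rewrite !gr_mulZl (gr_mul1l_in Ry_in) (gr_mul1l_in y_in) => ->; congr R.
by gr_pointwise; ring.
Qed.

Lemma splitting_of_RB : splitting b lam R.
Proof.
have RR := RB_idempotent.
have neg_lam_neq0 : - lam != 0 by rewrite oppr_eq0.
exists (fun x => gr_in x /\ R x = @gr0 F), (fun x => gr_in x /\ R x = gr_scale (- lam) x).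
split; first exact: subalg_RB_kernel.
split; first exact: subalg_RB_eigen.
split.
  move=> x x_in; have Rx_in := RB_in RB x_in.
  pose a2 := gr_scale (- lam^-1) (R x).
  have a2_in : gr_in a2 by apply: gr_in_scale.
  exists (gr_add x (gr_scale (-1) a2)), a2; split; last split.
  - split; first exact: (gr_in_add x_in (gr_in_scale _ a2_in)).
    rewrite (RBD RB x_in (gr_in_scale _ a2_in)) !(RBZ RB) // RR //.
    by gr_pointwise; field.
  - split=> //; rewrite (RBZ RB) // RR //.
    by rewrite /a2; gr_pointwise; ring.
  - by gr_pointwise; ring.
split.
  move=> x [_ Rx] [_]; rewrite Rx -{1}(gr_scaler0 (- lam)).
  by move=> /(gr_scale_inj neg_lam_neq0) ->.
move=> a1 a2 [a1_in Ra1] [a2_in Ra2].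
by rewrite (RBD RB a1_in a2_in) Ra1 Ra2 gr_add0r.
Qed.

End NonzeroWeight.

Theorem corollary4 (F : fieldType) (b : option nat) (lam : F)
  (R : (seq nat -> F) -> (seq nat -> F)) :
  [pchar F] =i pred0 -> lam != 0 -> is_RB b lam R ->
  splitting b lam R /\
  (R (@gr1 F) = @gr0 F \/ R (@gr1 F) = gr_scale (- lam) (@gr1 F)).
Proof.
move=> charF0 lam_neq0 RB.
by split; [apply: (splitting_of_RB charF0 lam_neq0 RB) | apply: (RB_unit_cases charF0 lam_neq0 RB)].
Qed.
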